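(* Let $X$ be a Polish space and $n\in\mathbb{N}$. The map $\tau\mapsto\tau^*$ from $\mathcal{M}(X^{(n)})$ to $\mathcal{M}(X)$ is continuous.
   Context: $X^{(n)}$ is the quotient of $X^n$ by permutations of coordinates with the quotient topology, identified with the set of multisets $m:X\to\mathbb{N}$ of cardinality $n$. $\mathcal{M}(Z)$ denotes the finite Borel measures on $Z$ with the weak topology (generated by $\tau\mapsto\int f\,d\tau$ for bounded continuous $f$). For $\tau\in\mathcal{M}(X^{(n)})$, $\tau^*$ is the Borel measure on $X$ defined by $\tau^*(E)=\sum_{i=1}^n\tau\big(s^{-1}(\pi_i^{-1}(E))\big)$, where $s:X^{(n)}\to X^n$ is a universally measurable map with $q\circ s=\mathrm{id}$ ($q$ the quotient map) and $\pi_i:X^n\to X$ the $i$-th projection; equivalently $\tau^*(E)=\int\sum_{x\in E}m(x)\,d\tau(m)$. *)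

From HB Require Import structures.
From mathcomp Require Import all_boot all_order all_algebra all_fingroup.
From mathcomp Require Import generic_quotient.
Local Open Scope quotient_scope.
From mathcomp Require Import all_classical all_reals all_analysis.

Set Implicit Arguments.
Unset Strict Implicit.
Unset Printing Implicit Defensive.
Import Order.TTheory GRing.Theory Num.Theory numFieldNormedType.Exports.
Local Open Scope classical_set_scope.
Local Open Scope ring_scope.

Definition polish (R : realType) (X : topologicalType) : Prop :=
  (exists D : set X, countable D /\ closure D = setT) /\
  exists d : X -> X -> R,
    [/\
        [/\ (forall x y, 0 <= d x y),
            (forall x y, d x y = 0 <-> x = y),
            (forall x y, d x y = d y x) &
            (forall x y z, d x z <= d x y + d y z)],
        (forall A : set X, open A <->
            (forall x, A x -> exists2 e : R, 0 < e & [set y | d x y < e] `<=` A)) &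
        (forall u : nat -> X,
            (forall e : R, 0 < e -> exists N : nat, forall p q : nat,
                 (N <= p)%N -> (N <= q)%N -> d (u p) (u q) < e) ->
            exists l : X, (fun k => d (u k) l) @ \oo --> (0 : R^o))].

(** ** Symmetric power X^(n) = X^n / S_n with the quotient topology.
    X^n is 'rV[X]_n with its product topology. *)
Section SymPow.
Variables (X : ptopologicalType) (n : nat).

Definition entries (v : 'rV[X]_n) : seq X := [seq v ord0 i | i <- enum 'I_n].

(* two points of X^n are identified iff they differ by a permutation of
   coordinates, i.e. iff their coordinate lists are permutations of each other *)
Definition perm_rel : rel 'rV[X]_n := fun v w => perm_eq (entries v) (entries w).

Lemma perm_rel_refl : reflexive perm_rel.
Proof. by move=> v; exact: perm_refl. Qed.

Lemma perm_rel_sym : symmetric perm_rel.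
Proof. by move=> v w; exact: perm_sym. Qed.

Lemma perm_rel_trans : transitive perm_rel.
Proof. by move=> v u w; exact: perm_trans. Qed.

Canonical perm_equiv := EquivRel perm_rel perm_rel_refl perm_rel_sym perm_rel_trans.

Definition sympow_quot := {eq_quot perm_equiv}.

Definition sympow : ptopologicalType := quotient_topology sympow_quot.

(** multiset view: for q in X^(n) and E, the number sum_{x in E} q(x) *)
Definition mult_in (E : set X) (q : sympow) : nat :=
  count (fun x => `[< E x >]) (entries (repr q)).

End SymPow.

Definition borel (T : ptopologicalType) := g_sigma_algebraType (@open T).

Definition fmeasure (R : realType) (T : ptopologicalType) :=
  {finite_measure set (borel T) -> \bar R}.
HB.instance Definition _ R T := gen_eqMixin (fmeasure R T).
HB.instance Definition _ R T := gen_choiceMixin (fmeasure R T).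

Definition bcfun (R : realType) (T : ptopologicalType) :=
  {f : T -> R | continuous f /\ exists M : R, forall x, `|f x| <= M}.

Definition meas_eval (R : realType) (T : ptopologicalType) (mu : fmeasure R T) :
  {ptws bcfun R T -> R} :=
  fun f => fine (\int[mu]_x ((proj1_sig f : borel T -> R) x)%:E).

(** M(T): finite Borel measures with the weak topology, i.e. the initial
    topology of the maps mu |-> \int f dmu, f bounded continuous *)
Definition Meas (R : realType) (T : ptopologicalType) :=
  initial_topology (@meas_eval R T).

From HB Require Import structures.
From mathcomp Require Import all_boot all_order all_algebra.
From mathcomp Require Import generic_quotient zify lra.
From mathcomp Require Import all_classical all_reals all_analysis.
From mathcomp Require Import measurable_realfun.

Set Implicit Arguments.
Unset Strict Implicit.
Unset Printing Implicit Defensive.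
Import Order.TTheory GRing.Theory Num.Theory numFieldNormedType.Exports.
Local Open Scope classical_set_scope.
Local Open Scope ring_scope.

(* tau^* is the mixture of the finite measures kappa_q = sum_(x in q) delta_x
   against tau.  For open E the sets {q | k <= q(E)} are open in X^(n), so
   q |-> kappa_q(E) is measurable for open E, hence for every Borel E by a
   Dynkin argument.  For a bounded continuous g we then get
   int g dtau^* = int (sum_(x in q) g x) dtau(q), and q |-> sum_(x in q) g x is
   bounded and continuous on X^(n), being induced by a continuous symmetric
   function on X^n.  Hence each map tau |-> int g dtau^* is one of the maps
   defining the weak topology of M(X^(n)). *)

Section mixture.
Context d d' (Y : measurableType d) (Z : measurableType d') (R : realType).
Local Open Scope ereal_scope.

Definition kconst (mu : {finite_measure set Y -> \bar R}) :
  unit -> {measure set Y -> \bar R} := fun _ => mu.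

Section kconst.
Variable mu : {finite_measure set Y -> \bar R}.

Let measurable_kconst U : measurable U -> measurable_fun [set: unit] (kconst mu ^~ U).
Proof. by move=> _; exact: (measurable_cst (mu U)). Qed.

HB.instance Definition _ := isKernel.Build _ _ _ _ R (kconst mu) measurable_kconst.

Let kconst_uub : measure_fam_uub (kconst mu).
Proof.
exists (fine (mu setT) + 1)%R => x; rewrite /kconst -[X in X < _]fineK ?fin_num_measure//.
by rewrite lte_fin ltrDl.
Qed.

HB.instance Definition _ := Kernel_isFinite.Build _ _ _ _ R (kconst mu) kconst_uub.

End kconst.

Definition ksnd (k : R.-fker Y ~> Z) : unit * Y -> {measure set Z -> \bar R} :=
  k \o snd.

Section ksnd.
Variable k : R.-fker Y ~> Z.

Let measurable_ksnd U : measurable U -> measurable_fun [set: unit * Y] (ksnd k ^~ U).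
Proof. by move=> mU; exact: measurableT_comp (measurable_kernel k _ mU) _. Qed.

HB.instance Definition _ := isKernel.Build _ _ _ _ R (ksnd k) measurable_ksnd.

Let ksnd_uub : measure_fam_uub (ksnd k).
Proof. by have [r kr] := measure_uub k; exists r => -[]. Qed.

HB.instance Definition _ := Kernel_isFinite.Build _ _ _ _ R (ksnd k) ksnd_uub.

End ksnd.

Variables (mu : {finite_measure set Y -> \bar R}) (k : R.-fker Y ~> Z).

(* A |-> \int[mu]_y k y A, as a kernel composition over the one-point
   parameter space. *)
Definition mixture : set Z -> \bar R := kcomp (kconst mu) (ksnd k) tt.

HB.instance Definition _ := Measure.on mixture.

Import KCOMP_FINITE_KERNEL.

Let mixture_fin : fin_num_fun mixture.
Proof.
move=> A mA; have /measure_fam_uubP[r hr] := measure_uub (kconst mu \; ksnd k).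
rewrite ge0_fin_numE ?measure_ge0//.
apply: le_lt_trans (lt_trans (hr tt) (ltry _)).
by apply: (le_measure ((kconst mu \; ksnd k) tt)); rewrite ?inE.
Qed.

HB.instance Definition _ := Measure_isFinite.Build _ _ R mixture mixture_fin.

Lemma integral_mixture f : (forall z, 0 <= f z) -> measurable_fun [set: Z] f ->
  \int[mixture]_z f z = \int[mu]_y \int[k y]_z f z.
Proof. by move=> f0 mf; rewrite (integral_kcomp (kconst mu) (ksnd k)). Qed.

End mixture.

Lemma open_measurable_borel (T : ptopologicalType) (A : set T) :
  open A -> measurable (A : set (borel T)).
Proof. by move=> oA; apply: sub_gen_smallest. Qed.

Lemma continuous_measurable_borel (R : realType) (T : ptopologicalType) (g : T -> R) :
  continuous g -> measurable_fun setT (g : borel T -> R).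
Proof.
move=> cg; apply: (measurability (@RGenOpens.G R) (RGenOpens.measurableE R)).
move=> _ [B [x [y ->]] <-]; rewrite setTI; apply: open_measurable_borel.
exact: (proj1 (continuousP g)) cg _ (itv_open x y).
Qed.

Lemma ptws_continuous (R : realType) (Z : topologicalType) (I : Type)
    (h : Z -> {ptws I -> R}) :
  (forall i, continuous (fun z => h z i)) -> continuous h.
Proof.
move=> hc z; apply/cvg_sup => i.
exact: (@continuous_comp_initial _ _ _ (fun f : I -> R => f i) h (hc i)).
Qed.

HB.instance Definition _ (R : realType) (T : ptopologicalType) :=
  gen_eqMixin (bcfun R T).

Lemma continuous_meas_eval (R : realType) (T : ptopologicalType) (f : bcfun R T) :
  continuous (fun mu : Meas R T => meas_eval mu f).
Proof.
move=> mu.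
exact: continuous_comp (@initial_continuous _ _ (@meas_eval R T) mu)
  (@proj_continuous (bcfun R T) (fun _ => R) f (meas_eval mu)).
Qed.

Lemma continuous_mx_entry (T : topologicalType) m n (i : 'I_m) (j : 'I_n) :
  continuous (fun v : 'M[T]_(m, n) => v i j).
Proof.
move=> v A /= nA.
exists (fun i' j' => if (i' == i) && (j' == j) then A else setT).
  by move=> i' j'; case: ifP => [/andP[/eqP-> /eqP->]//|_]; exact: filterT.
by move=> w /(_ i j); rewrite !eqxx.
Qed.

Lemma sum_lt_minn (m k : nat) : (\sum_(i < k) (i < m : nat))%N = minn m k.
Proof.
elim: k => [|k IH]; first by rewrite big_ord0 minn0.
by rewrite big_ord_recr /= IH; lia.
Qed.

Section multiset.
Variables (X : ptopologicalType) (n : nat).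
Local Open Scope quotient_scope.
Local Notation S := (sympow X n).

Definition mset_seq (q : S) : seq X := entries (repr q).

Lemma size_mset_seq (q : S) : size (mset_seq q) = n.
Proof. by rewrite /mset_seq /entries size_map size_enum_ord. Qed.

Lemma perm_mset_seq_pi (v : 'rV[X]_n) : perm_eq (mset_seq (\pi_S v)) (entries v).
Proof.
have : \pi_(sympow_quot X n) (repr (\pi_S v)) = \pi_(sympow_quot X n) v by rewrite reprK.
by move/eqmodP.
Qed.

Lemma mult_inE (E : set X) (q : S) : mult_in E q = count (fun x => `[< E x >]) (mset_seq q).
Proof. by []. Qed.

Lemma mult_in_le (E : set X) (q : S) : (mult_in E q <= n)%N.
Proof. by rewrite mult_inE -(size_mset_seq q) count_size. Qed.

Lemma mult_inT (q : S) : mult_in setT q = n.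
Proof.
by rewrite mult_inE -(size_mset_seq q) -count_predT; apply: eq_count => x; exact/asboolP.
Qed.

Lemma mult_inC (E : set X) (q : S) : mult_in (~` E) q = (n - mult_in E q)%N.
Proof.
rewrite !mult_inE -(size_mset_seq q) -(count_predC (fun x => `[< E x >])) addKn.
by apply: eq_count => x; exact: asbool_neg.
Qed.

Lemma open_count_ge (E : set X) k : open E ->
  open [set v : 'rV[X]_n | (k <= count (fun x => `[< E x >]) (entries v))%N].
Proof.
move=> oE; rewrite openE => v /= hv.
exists (fun i j => if `[< E (v i j) >] then E else setT).
  move=> i j; case: ifP => [/asboolP Ev|_]; last exact: filterT.
  by apply: open_nbhs_nbhs; split.
move=> w hw /=; apply: (leq_trans hv).
rewrite /entries !count_map; apply: sub_count => j /=.
by have := hw ord0 j; case: asboolP => //= Ev Ew _; exact/asboolP.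
Qed.

Lemma open_mult_in_ge (E : set X) k : open E -> open [set q : S | (k <= mult_in E q)%N].
Proof.
move=> /(@open_count_ge _ k); congr open; apply/seteqP; split => v /=;
  by rewrite mult_inE (seq.permP (perm_mset_seq_pi v)).
Qed.

Section mset_sum.
Variable R : realType.

Definition mset_sum (g : X -> R) (q : S) : R := \sum_(x <- mset_seq q) g x.

Lemma mset_sum_pi (g : X -> R) (v : 'rV[X]_n) :
  mset_sum g (\pi_S v) = \sum_(j < n) g (v ord0 j).
Proof. by rewrite /mset_sum (perm_big _ (perm_mset_seq_pi v)) big_map big_enum. Qed.

Lemma continuous_mset_sum (g : X -> R) : continuous g -> continuous (mset_sum g).
Proof.
move=> cg; apply/quotient_continuous.
rewrite (_ : _ \o _ = fun v : 'rV[X]_n => \sum_(j < n) g (v ord0 j)); last first.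
  by apply/funext => v /=; rewrite mset_sum_pi.
apply: continuous_big => [|j _ v]; first exact: add_continuous.
by apply: continuous_comp; [exact: continuous_mx_entry | exact: cg].
Qed.

Lemma mset_sum_bound (g : X -> R) M : (forall x, `|g x| <= M) ->
  forall q, `|mset_sum g q| <= n%:R * M.
Proof.
move=> gM q; rewrite /mset_sum -(size_mset_seq q).
elim: (mset_seq q) => [|x s IH] /=; first by rewrite big_nil normr0 mul0r.
by rewrite big_cons (le_trans (ler_normD _ _)) // -natr1 mulrDl mul1r addrC lerD.
Qed.

End mset_sum.

End multiset.

Section mset_measure.
Variables (R : realType) (X : ptopologicalType) (n : nat).
Local Notation S := (sympow X n).
Local Notation BX := (borel X).
Local Notation BS := (borel S).

Definition mset_measure (q : BS) : {measure set BX -> \bar R} :=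
  msum (fun i => \d_(nth (point : BX) (mset_seq q) i)) (size (mset_seq q)).

Lemma mset_measureE (q : BS) (E : set BX) : mset_measure q E = (mult_in E q)%:R%:E.
Proof.
rewrite /mset_measure /msum mult_inE.
transitivity (\sum_(x <- mset_seq q) (\d_(x : BX) E : \bar R))%E.
  by rewrite (big_nth (point : BX)) big_mkord.
elim: (mset_seq q) => [|x s IH]; first by rewrite big_nil.
by rewrite big_cons IH diracE /= natrD EFinD.
Qed.

Lemma integral_mset_measure (q : BS) (f : BX -> \bar R) :
  (forall x, 0 <= f x)%E -> measurable_fun [set: BX] f ->
  (\int[mset_measure q]_x f x = \sum_(x <- mset_seq q) f x)%E.
Proof.
move=> f0 mf; rewrite ge0_integral_measure_sum // (big_nth (point : BX)) big_mkord.
by apply: eq_bigr => i _; rewrite integral_dirac // diracE in_setT mul1e.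
Qed.

Lemma measurable_mult_in_open (E : set X) : open E ->
  measurable_fun setT (fun q : BS => (mult_in E q)%:R : R).
Proof.
move=> oE.
have -> : (fun q : BS => (mult_in E q)%:R : R) =
   (fun q => \sum_(k < n) (\1_([set q : S | (k.+1 <= mult_in E q)%N]) q : R)).
  apply/funext => q; under eq_bigr do rewrite indicE.
  rewrite -natr_sum (eq_bigr (fun k : 'I_n => (k < mult_in E q : nat))); last first.
    by move=> k _ /=; congr nat_of_bool; apply/idP/idP => [/set_mem|/mem_set].
  by rewrite sum_lt_minn (minn_idPl (mult_in_le E q)).
apply: measurable_sum => k; apply: measurable_indic.
by apply: open_measurable_borel; exact: open_mult_in_ge.
Qed.

Lemma measurable_mult_in (E : set BX) : measurable E ->
  measurable_fun setT (fun q : BS => ((mult_in E q)%:R : R)%:E).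
Proof.
move=> mE; apply: (@dynkin_induction _ BX open
  (fun E => measurable_fun setT (fun q : BS => ((mult_in E q)%:R : R)%:E))) => //.
- by move=> A B oA oB; exact: openI.
- by under eq_fun do rewrite mult_inT; exact: measurable_cst.
- by move=> A oA; apply/measurable_EFinP; exact: measurable_mult_in_open.
- move=> A _ mfA; under eq_fun do rewrite mult_inC natrB ?mult_in_le // EFinB.
  by apply: emeasurable_funB => //; exact: measurable_cst.
- move=> F mF tF mfF; under eq_fun do
    rewrite -mset_measureE (measure_bigcup _ [set: nat] F) //.
  apply: ge0_emeasurable_sum => // k _.
  by under eq_fun do rewrite mset_measureE; exact: mfF.
Qed.

Lemma measurable_mset_measure (E : set BX) : measurable E ->
  measurable_fun [set: BS] (mset_measure ^~ E).
Proof.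
by move=> mE; under eq_fun do rewrite mset_measureE; exact: measurable_mult_in.
Qed.

HB.instance Definition _ :=
  isKernel.Build _ _ BS BX R mset_measure measurable_mset_measure.

Let mset_measure_uub : measure_fam_uub mset_measure.
Proof.
by exists n.+1%:R => q; rewrite mset_measureE mult_inT lte_fin ltr_nat.
Qed.

HB.instance Definition _ :=
  Kernel_isFinite.Build _ _ BS BX R mset_measure mset_measure_uub.

Definition mset_star (tau : fmeasure R S) : fmeasure R X := mixture tau mset_measure.

Lemma mset_starE tau (E : set BX) :
  mset_star tau E = (\int[tau]_q ((mult_in E q)%:R)%:E)%E.
Proof. by apply: eq_integral => q _; exact: mset_measureE. Qed.

Lemma measurable_mset_sum (g : X -> R) : (forall x, 0 <= g x) ->
  measurable_fun setT (g : BX -> R) -> measurable_fun setT (mset_sum g : BS -> R).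
Proof.
move=> g0 mg; apply/measurable_EFinP.
rewrite (_ : _ \o _ = fun q : BS => \int[mset_measure q]_x (g x)%:E)%E; last first.
  apply/funext => q /=; rewrite integral_mset_measure ?sumEFin //.
  by apply/measurable_EFinP.
apply: measurable_fun_integral_kernel => //; first exact: measurable_mset_measure.
exact/measurable_EFinP.
Qed.

Lemma ge0_integral_mset_star tau (g : X -> R) : (forall x, 0 <= g x) ->
  measurable_fun setT (g : BX -> R) ->
  (\int[mset_star tau]_x (g x)%:E = \int[tau]_q (mset_sum g q)%:E)%E.
Proof.
move=> g0 mg; rewrite integral_mixture //; last exact/measurable_EFinP.
apply: eq_integral => q _; rewrite integral_mset_measure ?sumEFin //.
exact/measurable_EFinP.
Qed.

Lemma integral_mset_star tau (g : X -> R) M : measurable_fun setT (g : BX -> R) ->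
  (forall x, `|g x| <= M) ->
  (\int[mset_star tau]_x (g x)%:E = \int[tau]_q (mset_sum g q)%:E)%E.
Proof.
move=> mg gM.
have gpnM x : g^\+ x <= M /\ g^\- x <= M.
  have gpn : g^\+ x + g^\- x = `|g x| by exact: (congr1 (fun h => h x) (funrposDneg g)).
  by have := funrpos_ge0 g x; have := funrneg_ge0 g x; have := gM x; lra.
have integrable_mset_sum h : (forall x, 0 <= h x <= M) ->
    measurable_fun setT (h : BX -> R) -> tau.-integrable setT (EFin \o mset_sum h).
  move=> hM mh; apply: (le_integrable measurableT _ _
    (finite_measure_integrable_cst tau (n%:R * M) measurableT)).
    by apply/measurable_EFinP; apply: measurable_mset_sum => // x; case/andP: (hM x).
  move=> q _ /=; rewrite lee_fin (le_trans (mset_sum_bound _ _) (ler_norm _)) // => x.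
  by case/andP: (hM x) => h0 hM'; rewrite ger0_norm.
have mgp := measurable_funrpos mg; have mgn := measurable_funrneg mg.
rewrite integralE (_ : (fun x => (g x)%:E) = EFin \o g) // funerpos funerneg.
rewrite !ge0_integral_mset_star // -integralB_EFin //; last 2 first.
- by apply: integrable_mset_sum => // x; rewrite funrpos_ge0 (proj1 (gpnM x)).
- by apply: integrable_mset_sum => // x; rewrite funrneg_ge0 (proj2 (gpnM x)).
apply: eq_integral => q _; rewrite -EFinB /mset_sum -sumrB.
by congr EFin; apply: eq_bigr => x _; exact: (congr1 (fun h => h x) (funrposBneg g)).
Qed.

Lemma mset_sum_bcfun_subproof (f : bcfun R X) :
  continuous (mset_sum (sval f) : S -> R) /\
  exists M : R, forall q : S, `|mset_sum (sval f) q| <= M.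
Proof.
case: f => g [cg [M gM]]; split; first exact: continuous_mset_sum.
by exists (n%:R * M); exact: mset_sum_bound.
Qed.

Definition mset_sum_bcfun (f : bcfun R X) : bcfun R S :=
  exist _ (mset_sum (sval f)) (mset_sum_bcfun_subproof f).

Lemma meas_eval_mset_star tau (f : bcfun R X) :
  meas_eval (mset_star tau) f = meas_eval tau (mset_sum_bcfun f).
Proof.
case: f => g [cg [M gM]]; rewrite /meas_eval /=; congr fine.
exact: integral_mset_star (continuous_measurable_borel cg) gM.
Qed.

End mset_measure.

Theorem lemma6 (R : realType) (X : ptopologicalType) (n : nat) :
  polish R X ->
  exists star : Meas R (sympow X n) -> Meas R X,
    (forall (tau : Meas R (sympow X n)) (E : set (borel X)),
        measurable E ->
        (star tau : fmeasure R X) E =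
          (\int[tau : fmeasure R (sympow X n)]_q ((mult_in E q)%:R)%:E)%E) /\
    continuous star.
Proof.
move=> _; exists (fun tau : Meas R (sympow X n) => mset_star tau : Meas R X).
split => [tau E _|]; first exact: mset_starE.
apply: continuous_comp_initial; apply: ptws_continuous => f /=.
rewrite (_ : (fun _ => _) = fun tau => meas_eval tau (mset_sum_bcfun n f)).
  exact: continuous_meas_eval.
by apply/funext => tau; exact: meas_eval_mset_star.
Qed.
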